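(* A ring $R$ is NJ-symmetric if and only if the corner ring $eRe$ is NJ-symmetric for every idempotent $e\in R$.
   Context: Rings are associative with identity ($eRe$ has identity $e$). $N(R)$ is the set of nilpotent elements, $J(R)$ the Jacobson radical. $R$ is NJ-symmetric if for all $a,b,c\in R$, $abc\in N(R)$ implies $bac\in J(R)$. *)

From HB Require Import structures.
From mathcomp Require Import all_boot all_order all_algebra.
Set Implicit Arguments. Unset Strict Implicit. Unset Printing Implicit Defensive.
Import GRing.Theory.
Local Open Scope ring_scope.

Definition nilpotent_elt (R : pzRingType) (x : R) : Prop :=
  exists n : nat, x ^+ n = 0.

Definition left_ideal (R : pzRingType) (I : R -> Prop) : Prop :=
  [/\ I 0,
      (forall x y, I x -> I y -> I (x + y)) &
      (forall r x, I x -> I (r * x))].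

Definition maximal_left_ideal (R : pzRingType) (M : R -> Prop) : Prop :=
  [/\ left_ideal M, ~ M 1 &
      forall I : R -> Prop, left_ideal I -> ~ I 1 ->
        (forall x, M x -> I x) -> forall x, I x -> M x].

(* J(R): the Jacobson radical, the intersection of all maximal left ideals
   (J(R) = R when R has no maximal left ideal, i.e. R = 0). *)
Definition jacobson (R : pzRingType) (x : R) : Prop :=
  forall M : R -> Prop, maximal_left_ideal M -> M x.

Definition NJ_symmetric (R : pzRingType) : Prop :=
  forall a b c : R, nilpotent_elt (a * b * c) -> jacobson (b * a * c).

Section Corner.
Variables (R : pzRingType) (e : R) (he : e * e = e).

Record corner_raw := Corner { cval : R; cvalP : e * cval * e == cval }.

HB.instance Definition _ := [isSub for cval].
HB.instance Definition _ := [Choice of corner_raw by <:].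

(* The carrier of eRe; it is indexed by the idempotence proof [he] so that
   the ring structure (which needs it) can be attached canonically. *)
Definition corner (_ : e * e = e) : Type := corner_raw.
HB.instance Definition _ := Choice.on (corner he).

Lemma corner_left (x : corner_raw) : e * cval x = cval x.
Proof. by rewrite -(eqP (cvalP x)) !mulrA he. Qed.
Lemma corner_right (x : corner_raw) : cval x * e = cval x.
Proof. by rewrite -(eqP (cvalP x)) -!mulrA he. Qed.

Lemma corner0_subproof : e * 0 * e == 0 :> R.
Proof. by rewrite mulr0 mul0r. Qed.
Definition czero : corner he := Corner corner0_subproof.

Lemma cornerD_subproof (x y : corner_raw) :
  e * (cval x + cval y) * e == cval x + cval y.
Proof. by rewrite mulrDr mulrDl (eqP (cvalP x)) (eqP (cvalP y)). Qed.
Definition cadd (x y : corner he) : corner he := Corner (cornerD_subproof x y).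

Lemma cornerN_subproof (x : corner_raw) : e * (- cval x) * e == - cval x.
Proof. by rewrite mulrN mulNr (eqP (cvalP x)). Qed.
Definition copp (x : corner he) : corner he := Corner (cornerN_subproof x).

Lemma corner1_subproof : e * e * e == e.
Proof. by rewrite !he. Qed.
Definition cone : corner he := Corner corner1_subproof.

Lemma cornerM_subproof (x y : corner_raw) :
  e * (cval x * cval y) * e == cval x * cval y.
Proof. by rewrite mulrA corner_left -mulrA corner_right. Qed.
Definition cmul (x y : corner he) : corner he := Corner (cornerM_subproof x y).

Lemma caddA : associative cadd.
Proof. by move=> x y z; apply: val_inj; rewrite /= addrA. Qed.
Lemma caddC : commutative cadd.
Proof. by move=> x y; apply: val_inj; rewrite /= addrC. Qed.
Lemma cadd0 : left_id czero cadd.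
Proof. by move=> x; apply: val_inj; rewrite /= add0r. Qed.
Lemma caddN : left_inverse czero copp cadd.
Proof. by move=> x; apply: val_inj; rewrite /= addNr. Qed.

HB.instance Definition _ := GRing.isZmodule.Build (corner he) caddA caddC cadd0 caddN.

Lemma cmulA : associative cmul.
Proof. by move=> x y z; apply: val_inj; rewrite /= mulrA. Qed.
Lemma cmul1 : left_id cone cmul.
Proof. by move=> x; apply: val_inj; rewrite /= corner_left. Qed.
Lemma cmulr1 : right_id cone cmul.
Proof. by move=> x; apply: val_inj; rewrite /= corner_right. Qed.
Lemma cmulDl : left_distributive cmul cadd.
Proof. by move=> x y z; apply: val_inj; rewrite /= mulrDl. Qed.
Lemma cmulDr : right_distributive cmul cadd.
Proof. by move=> x y z; apply: val_inj; rewrite /= mulrDr. Qed.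

HB.instance Definition _ :=
  GRing.Zmodule_isPzRing.Build (corner he) cmulA cmul1 cmulr1 cmulDl cmulDr.

End Corner.

From HB Require Import structures.
From mathcomp Require Import all_boot all_order all_algebra.
Set Implicit Arguments.
Unset Strict Implicit.
Unset Printing Implicit Defensive.

Import GRing.Theory.
Local Open Scope ring_scope.

(* For an idempotent e, every maximal left ideal M of eRe is the trace of the
   maximal left ideal {x | forall r, e r x e \in M} of R; hence J(R) meets eRe
   inside J(eRe).  Nilpotency passes between eRe and R along the inclusion, so
   NJ-symmetry descends from R to eRe; the converse is the case e = 1, since
   1R1 is isomorphic to R. *)

Section LeftIdeals.
Variable R : pzRingType.
Implicit Types (I : R -> Prop) (x y : R).

Lemma left_idealN I x : left_ideal I -> I x -> I (- x).
Proof. by case=> _ _ IM Ix; rewrite -mulN1r; apply: IM. Qed.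

Lemma left_idealB I x y : left_ideal I -> I x -> I y -> I (x - y).
Proof.
by move=> idealI Ix Iy; case: (idealI) => _ ID _; apply: ID => //; apply: left_idealN.
Qed.

End LeftIdeals.

Lemma nilpotent_eltS (R : pzRingType) (x : R) :
  nilpotent_elt x <-> exists n, x ^+ n.+1 = 0.
Proof.
split=> [[n xn0] | [n xn0]]; last by exists n.+1.
by exists n; rewrite exprSr xn0 mul0r.
Qed.

Section Morphisms.
Variables (S R : pzRingType) (f : S -> R).
Hypotheses (fD : {morph f : x y / x + y}) (fM : {morph f : x y / x * y}).

Lemma morph0 : f 0 = 0.
Proof. by apply: (addrI (f 0)); rewrite -fD !addr0. Qed.

Lemma morph_exprS x n : f (x ^+ n.+1) = f x ^+ n.+1.
Proof. by elim: n => [|n IHn] //; rewrite exprS fM IHn -exprS. Qed.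

Lemma nilpotent_elt_morph x : nilpotent_elt x -> nilpotent_elt (f x).
Proof.
by case/nilpotent_eltS=> n xn0; apply/nilpotent_eltS; exists n;
  rewrite -morph_exprS xn0 morph0.
Qed.

Lemma nilpotent_elt_inj x : injective f -> nilpotent_elt (f x) -> nilpotent_elt x.
Proof.
move=> f_inj /nilpotent_eltS[n fxn0]; apply/nilpotent_eltS; exists n.
by apply: f_inj; rewrite morph_exprS fxn0 morph0.
Qed.

Lemma left_ideal_preim (I : R -> Prop) :
  left_ideal I -> left_ideal (fun x => I (f x)).
Proof.
case=> I0 ID IM; split=> [|x y Ix Iy|r x Ix]; first by rewrite morph0.
- by rewrite fD; apply: ID.
- by rewrite fM; apply: IM.
Qed.

Hypotheses (f1 : f 1 = 1) (g : R -> S) (fK : cancel g f).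

Lemma maximal_left_ideal_preim (M : R -> Prop) :
  maximal_left_ideal M -> maximal_left_ideal (fun x => M (f x)).
Proof.
case=> idealM M1 Mmax; split; first exact: left_ideal_preim.
  by rewrite f1.
move=> I idealI I1 MI x Ix; case: (idealI) => I0 ID IM.
pose J y := exists2 s, I s & f s = y.
have idealJ : left_ideal J.
  split=> [|_ _ [s Is <-] [t It <-]|r _ [s Is <-]].
  - by exists 0; rewrite ?morph0.
  - by exists (s + t); rewrite ?fD //; apply: ID.
  - by exists (g r * s); rewrite ?fM ?fK //; apply: IM.
have J1 : ~ J 1.
  case=> s Is fs1; apply: I1; rewrite -[1](subKr s).
  apply: left_idealB => //; apply: MI.
  have -> : f (s - 1) = 0 by apply: (addIr 1); rewrite -f1 -fD subrK f1 fs1 add0r.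
  by case: idealM.
apply: (Mmax J idealJ J1) => [y My|]; last by exists x.
by exists (g y); rewrite ?fK //; apply: MI; rewrite fK.
Qed.

Lemma jacobson_morph x : jacobson x -> jacobson (f x).
Proof.
by move=> Jx M maxM; apply: (Jx (fun x => M (f x))); apply: maximal_left_ideal_preim.
Qed.

End Morphisms.

Section CornerJacobson.
Variables (R : pzRingType) (e : R) (he : e * e = e).

Lemma cvalD : {morph (fun x : corner he => cval x) : x y / x + y}.
Proof. by []. Qed.

Lemma cvalM : {morph (fun x : corner he => cval x) : x y / x * y}.
Proof. by []. Qed.

Lemma corner_proj_subproof (x : R) : e * (e * x * e) * e == e * x * e.
Proof. by rewrite !mulrA he -!mulrA he. Qed.

Definition corner_proj (x : R) : corner he := Corner (corner_proj_subproof x).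

Section CornerLift.
Variable M : corner he -> Prop.

Definition corner_lift (x : R) : Prop := forall r, M (corner_proj (r * x)).

Lemma left_ideal_corner_lift : left_ideal M -> left_ideal corner_lift.
Proof.
case=> M0 MD MM; split=> [r|x y Lx Ly r|s x Lx r]; last by rewrite mulrA.
- by have -> : corner_proj (r * 0) = 0 by apply: val_inj; rewrite /= !(mulr0, mul0r).
- have -> : corner_proj (r * (x + y)) = corner_proj (r * x) + corner_proj (r * y).
    by apply: val_inj; rewrite /= !(mulrDr, mulrDl).
  exact: MD.
Qed.

Lemma corner_lift_annihilator x : left_ideal M -> x * e = 0 -> corner_lift x.
Proof.
case=> M0 _ _ xe0 r.
by have -> : corner_proj (r * x) = 0 by apply: val_inj; rewrite /= -!mulrA xe0 !mulr0.
Qed.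

Lemma corner_lift_cval z : left_ideal M -> M z -> corner_lift (cval z).
Proof.
case=> _ _ MM Mz r.
have -> : corner_proj (r * cval z) = corner_proj r * z.
  by apply: val_inj; rewrite /= -!mulrA (corner_right he) (corner_left he).
exact: MM.
Qed.

Lemma corner_liftE z : corner_lift (cval z) -> M z.
Proof.
move/(_ 1); suff -> : corner_proj (1 * cval z) = z by [].
by apply: val_inj; rewrite /= mul1r (eqP (cvalP z)).
Qed.

Lemma maximal_left_ideal_corner_lift :
  maximal_left_ideal M -> maximal_left_ideal corner_lift.
Proof.
case=> idealM M1 Mmax; split; first exact: left_ideal_corner_lift.
  move/(_ 1); rewrite mulr1.
  by have -> : corner_proj 1 = 1 by apply: val_inj; rewrite /= mulr1 he.
move=> I idealI I1 liftI x Ix r; case: (idealI) => _ ID IM.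
have notIe : ~ I e.
  move=> Ie; apply: I1; rewrite -[1](subrK e) addrC; apply: ID => //.
  by apply/liftI/corner_lift_annihilator; rewrite ?mulrBl ?mul1r ?he ?subrr.
have MI_cval z : M z -> I (cval z) by move=> Mz; apply/liftI/corner_lift_cval.
have idealI_cval : left_ideal (fun z : corner he => I (cval z)).
  exact: (left_ideal_preim cvalD cvalM idealI).
apply: (Mmax _ idealI_cval notIe MI_cval); rewrite /=.
have -> : e * (r * x) * e = e * r * x - e * r * x * (1 - e).
  by rewrite mulrBr mulr1 opprB addrC subrK !mulrA.
apply: left_idealB => //; first by rewrite -mulrA; apply/IM/IM.
by apply/liftI/corner_lift_annihilator; rewrite // -mulrA mulrBl mul1r he subrr mulr0.
Qed.

End CornerLift.

Lemma jacobson_corner (z : corner he) : jacobson (cval z) -> jacobson z.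
Proof.
move=> Jz M maxM; apply: corner_liftE.
exact: Jz _ (maximal_left_ideal_corner_lift maxM).
Qed.

End CornerJacobson.

Theorem proposition2p19 (R : pzRingType) :
  NJ_symmetric R <->
  (forall (e : R) (he : e * e = e), NJ_symmetric (@corner R e he)).
Proof.
split=> [NJ_R e he a b c nil_abc | NJ_corner a b c nil_abc].
  apply: jacobson_corner; apply: (NJ_R (cval a)).
  exact (nilpotent_elt_morph (@cvalD _ _ he) (@cvalM _ _ he) nil_abc).
pose he1 := mulr1 (1 : R); pose u := corner_proj he1.
have uK : cancel u (@cval R 1) by move=> x /=; rewrite mulr1 mul1r.
have -> : b * a * c = cval (u b * u a * u c) by rewrite /= !(mulr1, mul1r).
apply: (jacobson_morph (@cvalD _ _ he1) (@cvalM _ _ he1) _ uK) => //; apply: NJ_corner.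
apply: (nilpotent_elt_inj (@cvalD _ _ he1) (@cvalM _ _ he1) val_inj).
by rewrite /= !(mulr1, mul1r).
Qed.
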